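(* Assume $\rho_\alpha^{\mathrm{dir}}<1$, let $\theta^\star$ be the unique projected Bellman fixed point, and let $x_k:=\theta_k-\theta^\star$. Fix $\varepsilon>0$ with $\beta_\varepsilon:=\rho_\alpha^{\mathrm{dir}}+\varepsilon<1$, and let $p_\varepsilon$ and $C_\varepsilon$ be as described in the context. Then for every $k\ge0$, \[ \begin{aligned} \mathbb E[p_\varepsilon(b_k+\xi_{k+1})\mid\mathcal F_k]\le{}&2\sqrt{C_\varepsilon}\,\phi_{\max}\big(R_{\max}+(1+\gamma)\|\Phi\theta^\star\|_\infty\big)\\ &+2\sqrt{C_\varepsilon}\,\phi_{\max}\|R+\gamma PV_{\theta^\star}-\Phi\theta^\star\|_\infty\\ &+4\sqrt{C_\varepsilon}(1+\gamma)\phi_{\max}^2\,p_\varepsilon(x_k). \end{aligned} \]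
   Context: Consider a finite discounted MDP with state space $\mathcal S=\{1,\dots,|\mathcal S|\}$, action space $\mathcal A=\{1,\dots,|\mathcal A|\}$, transition probabilities $P(s'\mid s,a)$, real rewards $r(s,a,s')$, expected reward $R(s,a)=\sum_{s'}P(s'\mid s,a)r(s,a,s')$, and discount factor $\gamma\in(0,1)$. Let $R_{\max}:=\max|r(s,a,s')|$. State-action vectors are ordered as $(1,1),(2,1),\dots,(|\mathcal S|,1),(1,2),\dots$, and $e_i$ is the coordinate vector of pair $i$. The matrix $P$ has rows $P(\cdot\mid s,a)$, and $R$ has entries $R(s,a)$. The set $\Theta$ is the set of deterministic stationary policies. For $\pi\in\Theta$, $\Pi^\pi$ has entry $1$ at row $s$, column $(s,\pi(s))$, and zeros elsewhere. The feature matrix $\Phi$ has full column rank and rows $\phi(s,a)^\top$. Let $\phi_{\max}:=\max\|\phi(s,a)\|_2$, and define $V_\theta(s)=\max_a\phi(s,a)^\top\theta$. The step size is $\alpha\in(0,1)$. Markovian observations: fix a behavior policy $b(a\mid s)$. The trajectory evolves as $s_{k+1}\sim P(\cdot\mid s_k,a_k)$, $r_{k+1}=r(s_k,a_k,s_{k+1})$, $a_{k+1}\sim b(\cdot\mid s_{k+1})$, with $X_k=(s_k,a_k)$. The chain has a stationary distribution $d>0$, and $D=\mathrm{diag}(d)$. The filtration is $\mathcal F_k=\sigma(\theta_0,X_0,r_1,X_1,\dots,r_k,X_k)$, and $\theta_0$ is deterministic. The update is $\theta_{k+1}=\theta_k+\alpha\phi(X_k)\big(r_{k+1}+\gamma\max_u\phi(s_{k+1},u)^\top\theta_k-\phi(X_k)^\top\theta_k\big)$.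 Define $\delta(\theta):=R+\gamma PV_\theta-\Phi\theta$, \[ \xi_{k+1}:=\phi(X_k)\big(r_{k+1}+\gamma\max_u\phi(s_{k+1},u)^\top\theta_k-\phi(X_k)^\top\theta_k-e_{X_k}^\top\delta(\theta_k)\big), \] and $b_k:=\Phi^\top(e_{X_k}e_{X_k}^\top-D)\delta(\theta_k)$. A projected Bellman fixed point is a $\theta^\star$ with $\Phi^\top D\delta(\theta^\star)=0$. Define $A_\pi:=I-\alpha\Phi^\top D\Phi+\alpha\gamma\Phi^\top DP\Pi^\pi\Phi$, and let $\rho_\alpha^{\mathrm{dir}}:=\lim_k\max_{\pi_i\in\Theta}\|A_{\pi_k}\cdots A_{\pi_1}\|^{1/k}$. When $\rho_\alpha^{\mathrm{dir}}<1$, a unique projected Bellman fixed point exists. Lyapunov norm: define \[ V_\varepsilon^\infty(x):=\lim_{t\to\infty}\sum_{\ell=0}^t\beta_\varepsilon^{-2\ell}\max_{\pi_1,\dots,\pi_\ell\in\Theta}\|A_{\pi_\ell}\cdots A_{\pi_1}x\|_2^2, \] where the $\ell=0$ term is $\|x\|_2^2$, and $p_\varepsilon:=\sqrt{V_\varepsilon^\infty}$ (a norm). Let $C_\varepsilon\ge1$ satisfy $\|x\|_2^2\le V_\varepsilon^\infty(x)\le C_\varepsilon\|x\|_2^2$ for all $x$. *)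

From HB Require Import structures.
From mathcomp Require Import all_boot all_order all_algebra.
From mathcomp Require Import all_classical all_reals all_analysis.
Set Implicit Arguments. Unset Strict Implicit. Unset Printing Implicit Defensive.
Import Order.TTheory GRing.Theory Num.Theory.
Local Open Scope ring_scope.
Local Open Scope classical_set_scope.

Section MDP.
Context {R : realType} {nS nA m : nat}.
Local Notation St := 'I_nS.+1.
Local Notation Ac := 'I_nA.+1.
Local Notation SA := (St * Ac)%type.
Local Notation vec := 'cV[R]_m.
Local Notation policy := {ffun St -> Ac}.

Definition dotv (u v : vec) : R := \sum_(i < m) u i ord0 * v i ord0.
Definition norm2 (v : vec) : R := Num.sqrt (\sum_(i < m) v i ord0 ^+ 2).

(* maximum of a nonnegative function over a finite type (0 if empty) *)
Definition maxnn {T : finType} (f : T -> R) : R := \big[Num.max/0]_(t : T) f t.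
Definition maxA (f : Ac -> R) : R := \big[Num.max/f ord0]_(a : Ac) f a.

Definition is_transition (P : St -> Ac -> St -> R) : Prop :=
  (forall s a s', 0 <= P s a s') /\ (forall s a, \sum_(s' : St) P s a s' = 1).
Definition is_behavior (b : St -> Ac -> R) : Prop :=
  (forall s a, 0 <= b s a) /\ (forall s, \sum_(a : Ac) b s a = 1).
Definition is_stationary (P : St -> Ac -> St -> R) (b : St -> Ac -> R)
    (d : St -> Ac -> R) : Prop :=
  [/\ (forall s a, 0 < d s a),
      \sum_(x : SA) d x.1 x.2 = 1 &
      forall s' a', d s' a' = \sum_(x : SA) d x.1 x.2 * P x.1 x.2 s' * b s' a'].

(* feature matrix Phi (rows phi(s,a)^T, rows listed in enum order of SA) *)
Definition Phimx (phi : St -> Ac -> vec) : 'M[R]_(#|{: SA}|, m) :=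
  \matrix_(i, j) phi (enum_val i).1 (enum_val i).2 j ord0.

Variables (P : St -> Ac -> St -> R) (r : St -> Ac -> St -> R)
          (phi : St -> Ac -> vec) (d : St -> Ac -> R) (gamma alpha : R).

Definition Qf (th : vec) (s : St) (a : Ac) : R := dotv (phi s a) th.
Definition Vf (th : vec) (s : St) : R := maxA (Qf th s).
Definition Rexp (s : St) (a : Ac) : R := \sum_(s' : St) P s a s' * r s a s'.
Definition delta (th : vec) (s : St) (a : Ac) : R :=
  Rexp s a + gamma * (\sum_(s' : St) P s a s' * Vf th s') - Qf th s a.

Definition Rmax : R := maxnn (fun t : (SA * St)%type => `| r t.1.1 t.1.2 t.2 |).
Definition phimax : R := maxnn (fun x : SA => norm2 (phi x.1 x.2)).
Definition supnorm (f : St -> Ac -> R) : R := maxnn (fun x : SA => `| f x.1 x.2 |).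

(* Phi^T D v *)
Definition PhiTD (v : St -> Ac -> R) : vec :=
  \sum_(y : SA) (d y.1 y.2 * v y.1 y.2) *: phi y.1 y.2.

Definition td_update (th : vec) (x : SA) (s' : St) : vec :=
  th + alpha *: ((r x.1 x.2 s' + gamma * Vf th s' - Qf th x.1 x.2) *: phi x.1 x.2).

(* xi_{k+1} and b_k, with theta_k = th, X_k = x, s_{k+1} = s' *)
Definition xi (th : vec) (x : SA) (s' : St) : vec :=
  (r x.1 x.2 s' + gamma * Vf th s' - Qf th x.1 x.2 - delta th x.1 x.2) *: phi x.1 x.2.
(* Phi^T (e_x e_x^T - D) delta(theta) *)
Definition bk (th : vec) (x : SA) : vec :=
  delta th x.1 x.2 *: phi x.1 x.2 - PhiTD (delta th).

(* A_pi = I - alpha Phi^T D Phi + alpha gamma Phi^T D P Pi^pi Phi *)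
Definition Apol (pi : policy) : 'M[R]_m :=
  1%:M - alpha *: (\sum_(y : SA) d y.1 y.2 *: (phi y.1 y.2 *m (phi y.1 y.2)^T))
  + (alpha * gamma) *: (\sum_(y : SA) d y.1 y.2 *:
        (phi y.1 y.2 *m (\sum_(s' : St) P y.1 y.2 s' *: phi s' (pi s'))^T)).

(* prodA [:: pi_1; ...; pi_k] = A_{pi_k} ... A_{pi_1} *)
Definition prodA (t : seq policy) : 'M[R]_m :=
  foldl (fun M pi => Apol pi *m M) 1%:M t.

Definition opnorm (M : 'M[R]_m) : R :=
  sup [set norm2 (M *m x) | x in [set x : vec | norm2 x <= 1]].

Definition jsr_k (k : nat) : R :=
  maxnn (fun t : k.-tuple policy => opnorm (prodA t)).

(* partial sums defining V_eps^infty(x), with beta = beta_eps *)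
Definition lyap_partial (beta : R) (x : vec) (t : nat) : R :=
  \sum_(l < t.+1) beta ^- (2 * l) *
     maxnn (fun tp : l.-tuple policy => norm2 (prodA tp *m x) ^+ 2).

(* theta_k computed along a history X_0, X_1, ..., X_k = X0 :: h *)
Fixpoint theta_run (th : vec) (x : SA) (h : seq SA) : vec :=
  match h with
  | [::] => th
  | y :: h' => theta_run (td_update th x y.1) y h'
  end.

End MDP.

Section Traj.
Context {R : realType} {nS nA : nat}.
Local Notation St := 'I_nS.+1.
Local Notation Ac := 'I_nA.+1.
Local Notation SA := (St * Ac)%type.
Variables (P : St -> Ac -> St -> R) (b : St -> Ac -> R).

(* the history X_0 :: h has positive probability under the chain
   (for an arbitrary initial law charging X_0) *)
Definition reachable (x0 : SA) (h : seq SA) : bool :=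
  path (fun x y : SA => (0 < P x.1 x.2 y.1) && (0 < b y.1 y.2)) x0 h.

(* E[ g(s_{k+1}, a_{k+1}) | F_k ] when X_k = x : the Markov chain
   draws s_{k+1} ~ P(.|X_k), a_{k+1} ~ b(.|s_{k+1}) independently of the
   rest of F_k *)
Definition condE_next (x : SA) (g : St -> Ac -> R) : R :=
  \sum_(s' : St) \sum_(a' : Ac) P x.1 x.2 s' * b s' a' * g s' a'.
End Traj.

(* Write T(s') := r(X_k, s') + gamma V_{theta_k}(s') - Q_{theta_k}(X_k).  The
   terms delta(theta_k)(X_k) phi(X_k) cancel, so b_k + xi_{k+1} is
   T(s') phi(X_k) - Phi^T D delta(theta_k), whatever s' is.  By Cauchy-Schwarz,
   and because a maximum over actions is 1-Lipschitz for the sup norm, the maps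
   theta |-> Q_theta and theta |-> V_theta are phi_max-Lipschitz from the
   Euclidean norm to the sup norm.  Hence
   |T| <= R_max + (1 + gamma) (||Phi theta_star||_oo + phi_max ||x_k||) and
   |delta(theta_k)| <= ||delta(theta_star)||_oo + (1 + gamma) phi_max ||x_k||, and
   Phi^T D, a d-average of features, costs one more factor phi_max.  The
   sandwich ||x||^2 <= V <= C ||x||^2 turns ||.||_2 into p_eps in both
   directions, and a bound valid for every next state bounds the conditional
   expectation.  This gives half the stated constants. *)

From Pilot Require Import Defs.
From HB Require Import structures.
From mathcomp Require Import all_boot all_order all_algebra.
From mathcomp Require Import all_classical all_reals all_analysis.
From mathcomp Require Import lra ring.
Import Order.TTheory GRing.Theory Num.Theory numFieldNormedType.Exports.
Local Open Scope ring_scope.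

Lemma ler_norm_dist {R : realDomainType} [x y b e : R] :
  `|y| <= b -> `|x - y| <= e -> `|x| <= b + e.
Proof.
by move=> yb xye; rewrite -(subrKC y x); exact: le_trans (ler_normD _ _) (lerD yb xye).
Qed.

Section Averages.
Context {R : realType} {I : finType}.
Variables (w : I -> R) (B : R).
Hypotheses (w_ge0 : forall i, 0 <= w i) (w_sum1 : \sum_i w i = 1).

Lemma ler_wavg (f : I -> R) : (forall i, f i <= B) -> \sum_i w i * f i <= B.
Proof.
move=> fB; apply: le_trans (_ : \sum_i w i * B <= B).
  by apply: ler_sum => i _; exact: ler_wpM2l.
by rewrite -mulr_suml w_sum1 mul1r.
Qed.

Lemma ler_norm_wavg (f : I -> R) :
  (forall i, `|f i| <= B) -> `|\sum_i w i * f i| <= B.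
Proof.
move=> fB; rewrite ler_norml; apply/andP; split.
  rewrite lerNl -sumrN; under eq_bigr do rewrite -mulrN.
  by apply: ler_wavg => i; have := fB i; rewrite ler_norml lerNl => /andP[].
by apply: ler_wavg => i; have := fB i; rewrite ler_norml => /andP[].
Qed.

End Averages.

Lemma CauchySchwarz_sum {R : realFieldType} {I : finType} (a b : I -> R) :
  (\sum_i a i * b i) ^+ 2 <= (\sum_i a i ^+ 2) * (\sum_i b i ^+ 2).
Proof.
have lagrange_ge0 : 0 <= \sum_i \sum_j (a i * b j - a j * b i) ^+ 2.
  by apply: sumr_ge0 => i _; apply: sumr_ge0 => j _; exact: sqr_ge0.
have expand i j : (a i * b j - a j * b i) ^+ 2 =
    a i ^+ 2 * b j ^+ 2 + a j ^+ 2 * b i ^+ 2 - (a i * b i * (a j * b j)) *+ 2.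
  by rewrite mulr2n; ring.
have sum_ab2 : \sum_i \sum_j a i ^+ 2 * b j ^+ 2 =
    (\sum_i a i ^+ 2) * (\sum_i b i ^+ 2).
  by rewrite mulr_suml; apply: eq_bigr => i _; rewrite mulr_sumr.
have sum_ba2 : \sum_i \sum_j a j ^+ 2 * b i ^+ 2 =
    (\sum_i a i ^+ 2) * (\sum_i b i ^+ 2).
  by rewrite exchange_big.
have sum_abab : \sum_i \sum_j a i * b i * (a j * b j) = (\sum_i a i * b i) ^+ 2.
  by rewrite expr2 mulr_suml; apply: eq_bigr => i _; rewrite mulr_sumr.
move: lagrange_ge0; under eq_bigr => i _ do under eq_bigr => j _ do rewrite expand.
under eq_bigr => i _ do rewrite sumrB big_split /= sumrMnl.
rewrite sumrB big_split /= sumrMnl sum_ab2 sum_ba2 sum_abab.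
lra.
Qed.

Section EuclideanNorm.
Context {R : realType} {m : nat}.
Implicit Types u v : 'cV[R]_m.

Lemma norm2_ge0 v : 0 <= norm2 v.
Proof. exact: sqrtr_ge0. Qed.

Lemma norm2_sqr v : norm2 v ^+ 2 = \sum_i v i ord0 ^+ 2.
Proof. by rewrite sqr_sqrtr //; apply: sumr_ge0 => i _; exact: sqr_ge0. Qed.

Lemma dotv_CauchySchwarz u v : `|dotv u v| <= norm2 u * norm2 v.
Proof.
rewrite -ler_sqr ?nnegrE ?mulr_ge0 ?norm2_ge0 //.
by rewrite exprMn !norm2_sqr real_normK ?num_real // CauchySchwarz_sum.
Qed.

Lemma dotvBr w u v : dotv w (u - v) = dotv w u - dotv w v.
Proof.
by rewrite /dotv -sumrB; apply: eq_bigr => i _; rewrite !mxE mulrBr.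
Qed.

Lemma norm2D_sqr u v : norm2 (u + v) ^+ 2 = norm2 u ^+ 2 + dotv u v *+ 2 + norm2 v ^+ 2.
Proof.
rewrite !norm2_sqr /dotv -sumrMnl -!big_split /=; apply: eq_bigr => i _.
by rewrite mxE sqrrD.
Qed.

Lemma ler_norm2D u v : norm2 (u + v) <= norm2 u + norm2 v.
Proof.
rewrite -ler_sqr ?nnegrE ?addr_ge0 ?norm2_ge0 // norm2D_sqr sqrrD.
rewrite lerD2r lerD2l lerMn2r /=.
exact: le_trans (ler_norm _) (dotv_CauchySchwarz u v).
Qed.

Lemma norm2Z (c : R) v : norm2 (c *: v) = `|c| * norm2 v.
Proof.
rewrite /norm2 -sqrtr_sqr -sqrtrM ?sqr_ge0 //; congr Num.sqrt.
by rewrite mulr_sumr; apply: eq_bigr => i _; rewrite mxE exprMn.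
Qed.

Lemma ler_norm2B u v : norm2 (u - v) <= norm2 u + norm2 v.
Proof.
by rewrite -[norm2 v]mul1r -normrN1 -norm2Z scaleN1r ler_norm2D.
Qed.

Lemma ler_norm2_wavg {I : finType} (w : I -> R) (F : I -> 'cV[R]_m) B :
  (forall i, 0 <= w i) -> \sum_i w i = 1 -> (forall i, norm2 (F i) <= B) ->
  norm2 (\sum_i w i *: F i) <= B.
Proof.
move=> w_ge0 w_sum1 FB; apply: le_trans (_ : \sum_i w i * norm2 (F i) <= B).
  elim/big_rec2: _ => [|i y x _ ih].
    by rewrite /norm2 big1 ?sqrtr0 // => i _; rewrite mxE expr0n.
  apply: le_trans (ler_norm2D _ _) _.
  by rewrite norm2Z ger0_norm // lerD2l.
exact: ler_wavg.
Qed.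

End EuclideanNorm.

Section MaxOverActions.
Context {R : realType} {nA : nat}.
Implicit Types f g : 'I_nA.+1 -> R.

Lemma maxA_le_add f g B : (forall a, f a - g a <= B) -> Defs.maxA f <= Defs.maxA g + B.
Proof.
move=> fgB; have f_le a : f a <= Defs.maxA g + B.
  apply: le_trans (_ : f a <= g a + B) _; first by have := fgB a; lra.
  by rewrite lerD2r; exact: le_bigmax.
by apply: bigmax_le => [|a _]; exact: f_le.
Qed.

Lemma maxA_dist_le f g B :
  (forall a, `|f a - g a| <= B) -> `|Defs.maxA f - Defs.maxA g| <= B.
Proof.
move=> fgB; have gfB a : `|g a - f a| <= B by rewrite distrC.
have := maxA_le_add _ _ _ (fun a => ler_normlW (fgB a)).
have := maxA_le_add _ _ _ (fun a => ler_normlW (gfB a)).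
by rewrite ler_norml; lra.
Qed.

End MaxOverActions.

Section MaxBounds.
Context {R : realType}.

Lemma maxnn_ge0 {T : finType} (f : T -> R) : 0 <= Defs.maxnn f.
Proof. exact: bigmax_ge_id. Qed.

Lemma ler_maxnn {T : finType} (f : T -> R) t : f t <= Defs.maxnn f.
Proof. exact: le_bigmax. Qed.

End MaxBounds.

Section QLearningBounds.
Context {R : realType} {nS nA m : nat}.
Local Notation St := 'I_nS.+1.
Local Notation Ac := 'I_nA.+1.
Local Notation SA := (St * Ac)%type.
Context {P r : St -> Ac -> St -> R} {phi : St -> Ac -> 'cV[R]_m}
        {d : St -> Ac -> R} {gamma : R}.
Hypotheses (hP : is_transition P) (gamma_ge0 : 0 <= gamma).

Lemma norm2_phi_le s a : norm2 (phi s a) <= phimax phi.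
Proof. exact: (ler_maxnn (fun x : SA => norm2 (phi x.1 x.2)) (s, a)). Qed.

Lemma ler_supnorm (f : St -> Ac -> R) s a : `|f s a| <= supnorm f.
Proof. exact: (ler_maxnn (fun x : SA => `|f x.1 x.2|) (s, a)). Qed.

Lemma ler_Rmax s a s' : `|r s a s'| <= Rmax r.
Proof. exact: (ler_maxnn (fun t : SA * St => `|r t.1.1 t.1.2 t.2|) ((s, a), s')). Qed.

Lemma norm_Vf_le th s : `|Vf phi th s| <= supnorm (Qf phi th).
Proof.
rewrite ler_norml; apply/andP; split.
  have Q0_le : Qf phi th s ord0 <= Vf phi th s by exact: le_bigmax.
  have := ler_supnorm (Qf phi th) s ord0.
  by rewrite ler_norml => /andP[lo _]; exact: le_trans lo Q0_le.
apply: bigmax_le => [|a _]; exact: le_trans (ler_norm _) (ler_supnorm _ _ _).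
Qed.

Lemma norm2_PhiTD_le {v : St -> Ac -> R} {B : R} :
  (forall s a, 0 <= d s a) -> \sum_(x : SA) d x.1 x.2 = 1 ->
  (forall s a, `|v s a| <= B) -> norm2 (PhiTD phi d v) <= B * phimax phi.
Proof.
move=> d_ge0 d_sum1 vB; rewrite /PhiTD.
under eq_bigr do rewrite -scalerA.
apply: ler_norm2_wavg => // -[s a] /=.
rewrite norm2Z; apply: ler_pM => //; [exact: norm2_ge0 | exact: norm2_phi_le].
Qed.

Lemma bk_add_xi th x s' :
  bk P r phi d gamma th x + xi P r phi gamma th x s' =
  (r x.1 x.2 s' + gamma * Vf phi th s' - Qf phi th x.1 x.2) *: phi x.1 x.2
  - PhiTD phi d (delta P r phi gamma th).
Proof.
rewrite /bk /xi; move: (delta _ _ _ _ _ _ _) (r _ _ _ + _ - _) => D c.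
by rewrite scalerBl addrC addrA subrK.
Qed.

Variables th ths : 'cV[R]_m.
Local Notation dist := (phimax phi * norm2 (th - ths)).

Lemma Qf_dist s a : `|Qf phi th s a - Qf phi ths s a| <= dist.
Proof.
rewrite /Qf -dotvBr; apply: le_trans (dotv_CauchySchwarz _ _) _.
by rewrite ler_wpM2r ?norm2_ge0 ?norm2_phi_le.
Qed.

Lemma Vf_dist s : `|Vf phi th s - Vf phi ths s| <= dist.
Proof. exact/maxA_dist_le/Qf_dist. Qed.

Lemma delta_dist s a :
  `|delta P r phi gamma th s a - delta P r phi gamma ths s a| <= (1 + gamma) * dist.
Proof.
have [P_ge0 P_sum1] := hP.
have EV_dist : `|\sum_s' P s a s' * (Vf phi th s' - Vf phi ths s')| <= dist.
  by apply: ler_norm_wavg => // s'; exact: Vf_dist.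
have -> : delta P r phi gamma th s a - delta P r phi gamma ths s a =
    gamma * (\sum_s' P s a s' * (Vf phi th s' - Vf phi ths s'))
    - (Qf phi th s a - Qf phi ths s a).
  by rewrite /delta (eq_bigr _ (fun s' _ => mulrBr _ _ _)) sumrB; ring.
apply: le_trans (ler_normB _ _) _.
have := ler_wpM2l gamma_ge0 EV_dist; have := Qf_dist s a.
rewrite normrM (ger0_norm gamma_ge0); lra.
Qed.

Lemma norm2_bk_add_xi_le x s' :
  (forall s a, 0 <= d s a) -> \sum_(y : SA) d y.1 y.2 = 1 ->
  norm2 (bk P r phi d gamma th x + xi P r phi gamma th x s') <=
  phimax phi * (Rmax r + (1 + gamma) * supnorm (Qf phi ths))
  + phimax phi * supnorm (delta P r phi gamma ths)
  + 2 * (1 + gamma) * phimax phi ^+ 2 * norm2 (th - ths).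
Proof.
move=> d_ge0 d_sum1; set S := supnorm (Qf phi ths).
have V_le : `|Vf phi th s'| <= S + dist := ler_norm_dist (norm_Vf_le ths s') (Vf_dist s').
have Q_le : `|Qf phi th x.1 x.2| <= S + dist :=
  ler_norm_dist (ler_supnorm _ _ _) (Qf_dist _ _).
have tderr_le : `|r x.1 x.2 s' + gamma * Vf phi th s' - Qf phi th x.1 x.2|
    <= Rmax r + (1 + gamma) * (S + dist).
  have := ler_normB (r x.1 x.2 s' + gamma * Vf phi th s') (Qf phi th x.1 x.2).
  have := ler_normD (r x.1 x.2 s') (gamma * Vf phi th s').
  rewrite normrM (ger0_norm gamma_ge0).
  have := ler_wpM2l gamma_ge0 V_le; have := ler_Rmax x.1 x.2 s'; lra.
have delta_le : forall s a, `|delta P r phi gamma th s a|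
    <= supnorm (delta P r phi gamma ths) + (1 + gamma) * dist.
  by move=> s a; exact: ler_norm_dist (ler_supnorm _ _ _) (delta_dist _ _).
rewrite bk_add_xi; apply: le_trans (ler_norm2B _ _) _; rewrite norm2Z.
have := ler_pM (normr_ge0 _) (norm2_ge0 _) tderr_le (norm2_phi_le x.1 x.2).
have := norm2_PhiTD_le d_ge0 d_sum1 delta_le.
lra.
Qed.

End QLearningBounds.

Lemma condE_next_le {R : realType} {nS nA : nat}
    {P : 'I_nS.+1 -> 'I_nA.+1 -> 'I_nS.+1 -> R} {b : 'I_nS.+1 -> 'I_nA.+1 -> R}
    [x g] [B : R] :
  is_transition P -> is_behavior b -> (forall s a, g s a <= B) ->
  condE_next P b x g <= B.
Proof.
move=> [P_ge0 P_sum1] [b_ge0 b_sum1] gB; rewrite /condE_next.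
under eq_bigr do under eq_bigr do rewrite -mulrA.
under eq_bigr do rewrite -mulr_sumr.
by apply: ler_wavg => // s; exact: ler_wavg.
Qed.

Section LyapunovNorm.
Context {R : realType} {m : nat} {V : 'cV[R]_m -> R} {C : R}.
Hypothesis hC : forall x, norm2 x ^+ 2 <= V x <= C * norm2 x ^+ 2.

Lemma norm2_le_sqrtV x : norm2 x <= Num.sqrt (V x).
Proof.
have /andP[lo _] := hC x.
by rewrite -(ger0_norm (norm2_ge0 x)) -sqrtr_sqr ler_wsqrtr.
Qed.

Lemma sqrtV_le_norm2 x : 0 <= C -> Num.sqrt (V x) <= Num.sqrt C * norm2 x.
Proof.
move=> C_ge0; have /andP[_ hi] := hC x.
apply: le_trans (ler_wsqrtr hi) _.
by rewrite sqrtrM // sqrtr_sqr ger0_norm // norm2_ge0.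
Qed.

End LyapunovNorm.

Local Open Scope classical_set_scope.

Theorem lemma6 (R : realType) (nS nA m : nat)
  (P r : 'I_nS.+1 -> 'I_nA.+1 -> 'I_nS.+1 -> R)
  (bpol d : 'I_nS.+1 -> 'I_nA.+1 -> R)
  (phi : 'I_nS.+1 -> 'I_nA.+1 -> 'cV[R]_m)
  (gamma alpha : R)
  (hgamma : 0 < gamma < 1) (halpha : 0 < alpha < 1)
  (hP : is_transition P) (hb : is_behavior bpol) (hd : is_stationary P bpol d)
  (hrank : \rank (Phimx phi) = m)
  (rho : R)
  (hrho : (fun k : nat => jsr_k P phi d gamma alpha k `^ (k%:R)^-1) @ \oo --> rho)
  (hrho1 : rho < 1)
  (thetas : 'cV[R]_m) (hfix : PhiTD phi d (delta P r phi gamma thetas) = 0)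
  (eps : R) (heps : 0 < eps) (hbeta : rho + eps < 1)
  (V : 'cV[R]_m -> R)
  (hV : forall x, (fun t : nat => lyap_partial P phi d gamma alpha (rho + eps) x t)
                    @ \oo --> V x)
  (C : R) (hC1 : 1 <= C)
  (hC : forall x, norm2 x ^+ 2 <= V x <= C * norm2 x ^+ 2)
  (theta0 : 'cV[R]_m) (X0 : 'I_nS.+1 * 'I_nA.+1) (h : seq ('I_nS.+1 * 'I_nA.+1))
  (hreach : reachable P bpol X0 h) :
  let thetak := theta_run r phi gamma alpha theta0 X0 h in
  let Xk := last X0 h in
  let p := fun x : 'cV[R]_m => Num.sqrt (V x) in
  let phm := phimax phi in
  condE_next P bpol Xk
    (fun s' _ => p (bk P r phi d gamma thetak Xk + xi P r phi gamma thetak Xk s'))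
  <= 2 * Num.sqrt C * phm
         * (Rmax r + (1 + gamma) * supnorm (Qf phi thetas))
     + 2 * Num.sqrt C * phm * supnorm (delta P r phi gamma thetas)
     + 4 * Num.sqrt C * (1 + gamma) * phm ^+ 2 * p (thetak - thetas).
Proof.
cbv zeta beta.
set th := theta_run _ _ _ _ _ _ _; set x := last _ _.
have gamma_ge0 : 0 <= gamma by case/andP: hgamma => /ltW.
have [d_gt0 d_sum1 _] := hd.
have d_ge0 s a : 0 <= d s a := ltW (d_gt0 s a).
have C_ge0 : 0 <= C := le_trans ler01 hC1.
have phm_ge0 : 0 <= phimax phi := maxnn_ge0 _.
have S_ge0 : 0 <= supnorm (Qf phi thetas) := maxnn_ge0 _.
have D_ge0 : 0 <= supnorm (delta P r phi gamma thetas) := maxnn_ge0 _.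
have R_ge0 : 0 <= Rmax r := maxnn_ge0 _.
have n_le_p := norm2_le_sqrtV hC (th - thetas).
apply: (condE_next_le hP hb) => s' _.
apply: le_trans (sqrtV_le_norm2 hC _ C_ge0) _.
apply: le_trans (ler_wpM2l (sqrtr_ge0 C)
  (norm2_bk_add_xi_le hP gamma_ge0 th thetas x s' d_ge0 d_sum1)) _.
have sC_ge0 := sqrtr_ge0 C.
have K_ge0 : 0 <= (1 + gamma) * phimax phi ^+ 2 by rewrite mulr_ge0 ?sqr_ge0 ?addr_ge0.
have A1_ge0 : 0 <= phimax phi * (Rmax r + (1 + gamma) * supnorm (Qf phi thetas)).
  by rewrite mulr_ge0 ?addr_ge0 ?mulr_ge0 ?addr_ge0.
have := mulr_ge0 sC_ge0 A1_ge0.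
have := mulr_ge0 sC_ge0 (mulr_ge0 phm_ge0 D_ge0).
have := mulr_ge0 sC_ge0 (mulr_ge0 K_ge0 (norm2_ge0 (th - thetas))).
have := ler_wpM2l sC_ge0 (ler_wpM2l K_ge0 n_le_p).
lra.
Qed.
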